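(* Let $\lambda=(\lambda_1,\dots,\lambda_r)$ be a partition of $n\ge1$. The Sprague–Grundy value $\mathbb{SG}(\mathcal{L}(\lambda))$ can be computed in $O(\log r)\le O(\log n)$ time units.
   Context: A partition of $n$ is a non-increasing sequence $\lambda_1\ge\dots\ge\lambda_r>0$ of integers with sum $n$, given as input as the list $(\lambda_1,\dots,\lambda_r)$ with random access to its entries; $()$ is the empty partition. For non-negative $i,j$, $\lambda[i,j]$ is $(\lambda_{i+1}-j,\dots,\lambda_r-j)$ with all non-positive entries removed. LCTR: positions $\mathcal{L}(\mu)$; if $\mu\neq()$ the two moves go to $\mathcal{L}(\mu[1,0])$ and $\mathcal{L}(\mu[0,1])$; $\mathcal{L}(())$ is terminal. Normal play; $\mathbb{SG}(A)=\operatorname{mex}\{\mathbb{SG}(B):A\to B\}$. A time unit is any of: reading one integer (entry) of the input, one basic arithmetic operation on integers (addition, subtraction, multiplication or division by 2, parity, comparison), or computing the mex of a set of at most two integers from $\{0,1,2\}$. *)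

From mathcomp Require Import all_boot all_order all_algebra.
Set Implicit Arguments. Unset Strict Implicit. Unset Printing Implicit Defensive.
Import Order.TTheory GRing.Theory Num.Theory.

Definition is_partition (n : nat) (lam : seq nat) : bool :=
  [&& sorted geq lam, all (fun x => 0 < x) lam & sumn lam == n].

(* lam[i,j] = (lam_{i+1}-j, ..., lam_r-j) with non-positive entries removed *)
Definition pshift (lam : seq nat) (i j : nat) : seq nat :=
  [seq (x - j)%N | x <- drop i lam & (j < x)%N].

Definition mex (s : seq nat) : nat :=
  find (fun k => k \notin s) (iota 0 (size s).+1).

(* Sprague-Grundy value with fuel; each move strictly decreases the sum of
   the partition, so fuel = sumn mu suffices. *)
Fixpoint sg_fuel (fuel : nat) (mu : seq nat) : nat :=
  match fuel with
  | 0 => 0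
  | f.+1 => if mu is [::] then 0
            else mex [:: sg_fuel f (pshift mu 1 0); sg_fuel f (pshift mu 0 1)]
  end.

Definition SG_LCTR (mu : seq nat) : nat := sg_fuel (sumn mu) mu.

(* Registers hold integers.  Every executed instruction costs one time unit. *)
Inductive instr : Type :=
| ILen  (d : nat)
| IRead (d s : nat)          (* reg d := lam_{reg s} (1-indexed), 0 if out of range *)
| IConst (d : nat) (c : int)
| IAdd (d a b : nat)
| ISub (d a b : nat)
| IMul (d a b : nat)
| IHalf (d a : nat)
| IPar (d a : nat)
| IMex (d a b : nat)
| IJlt (a b l : nat)
| IJmp (l : nat)
| IHalt (s : nat).

Definition program := seq instr.

Inductive config : Type :=
| Run (pc : nat) (regs : nat -> int)
| Done (v : int).

Definition upd (R : nat -> int) (d : nat) (v : int) : nat -> int :=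
  fun k => if k == d then v else R k.

Definition read_entry (lam : seq nat) (i : int) : int :=
  if (1 <= i)%R && (i <= Posz (size lam))%R then Posz (nth 0%N lam (absz (i - 1)))
  else 0%R.

Definition mexz (a b : int) : int :=
  Posz (mex [seq absz x | x <- [:: a; b] & (0 <= x)%R]).

Definition step (P : program) (lam : seq nat) (c : config) : config :=
  match c with
  | Done v => Done v
  | Run pc R =>
    if (pc < size P)%N then
      match nth (IHalt 0) P pc with
      | ILen d => Run pc.+1 (upd R d (Posz (size lam)))
      | IRead d s => Run pc.+1 (upd R d (read_entry lam (R s)))
      | IConst d c => Run pc.+1 (upd R d c)
      | IAdd d a b => Run pc.+1 (upd R d (R a + R b)%R)
      | ISub d a b => Run pc.+1 (upd R d (R a - R b)%R)
      | IMul d a b => Run pc.+1 (upd R d (R a * R b)%R)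
      | IHalf d a => Run pc.+1 (upd R d (R a %/ 2)%Z)
      | IPar d a => Run pc.+1 (upd R d (R a %% 2)%Z)
      | IMex d a b => Run pc.+1 (upd R d (mexz (R a) (R b)))
      | IJlt a b l => if (R a < R b)%R then Run l R else Run pc.+1 R
      | IJmp l => Run l R
      | IHalt s => Done (R s)
      end
    else Run pc R (* invalid program counter: the machine is stuck *)
  end.

Definition init : config := Run 0 (fun _ => 0%R).

Definition halts_in (P : program) (lam : seq nat) (t : nat) (v : int) : Prop :=
  iter t (step P lam) init = Done v /\
  forall t', (t' < t)%N -> exists pc R, iter t' (step P lam) init = Run pc R.

(* The position L(λ) is the Young diagram of λ, and the two moves delete its
   first row or its first column.  Let d be the side of the Durfee square,
   λ_d >= d >= λ_(d+1).  Deleting a row or a column moves the Durfee square by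
   at most one step, and SG(L(λ)) is a closed form [sg_formula] in d, the
   parity of λ_d - d or λ'_d - d, the rows λ_(d-2), λ_(d-1), λ_d and the
   columns λ'_(d-2), λ'_(d-1), λ'_d: by induction on |λ|, the formula
   satisfies the mex recursion.  Since λ is sorted, d and each λ'_j are found
   by binary search over the r parts in O(log r) reads, after which a fixed
   decision tree evaluates the formula; as r <= n, this gives a program
   running in O(log r) <= O(log n) steps. *)

From mathcomp Require Import all_boot all_order all_algebra.
From mathcomp Require Import zify.
Import GRing.Theory.

Definition is_part (mu : seq nat) : bool :=
  sorted geq mu && all (fun x => 0 < x) mu.

Definition remove_col (mu : seq nat) : seq nat := [seq x - 1 | x <- mu & 1 < x].

Lemma geq_trans : transitive geq.
Proof. by move=> a b c Hba Hac; exact: leq_trans Hac Hba. Qed.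

Lemma sorted_geq_cons {x s} : sorted geq (x :: s) -> all (fun y => y <= x) s.
Proof. exact: order_path_min geq_trans. Qed.

Lemma all_leq_nth {x s} k : all (fun y => y <= x) s -> nth 0 s k <= x.
Proof.
move=> Hall; case: (ltnP k (size s)) => Hk; last by rewrite nth_default.
exact: (allP Hall) _ (mem_nth 0 Hk).
Qed.

Lemma count_geq_out {x j s} :
  all (fun y => y <= x) s -> x < j -> count (fun y => j <= y) s = 0.
Proof. elim: s => //= y s IH /andP[Hy Hs] Hx; rewrite IH //; lia. Qed.

Lemma remove_col_le1 s : all (fun y => y <= 1) s -> remove_col s = [::].
Proof. by elim: s => //= y s IH /andP[Hy Hs]; rewrite /remove_col /= ifF; [exact: IH | lia]. Qed.

Lemma pshift_row mu : is_part mu -> pshift mu 1 0 = behead mu.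
Proof.
case/andP=> _ Hpos; rewrite /pshift drop1.
have Hb : all (fun x => 0 < x) (behead mu) by case: mu Hpos => //= x s /andP[].
by rewrite (all_filterP Hb); elim: (behead mu) => //= x s ->; rewrite subn0.
Qed.

Lemma pshift_col mu : pshift mu 0 1 = remove_col mu.
Proof. by rewrite /pshift drop0. Qed.

Lemma is_part_behead {mu} : is_part mu -> is_part (behead mu).
Proof. by case: mu => //= x s /and3P[Hs _ Hpos]; rewrite /is_part (path_sorted Hs). Qed.

Lemma is_part_remove_col {mu} : is_part mu -> is_part (remove_col mu).
Proof.
case/andP=> Hs _; apply/andP; split.
  rewrite sorted_map; apply: sub_sorted (sorted_filter geq_trans _ Hs).
  by move=> a b /=; rewrite /geq; lia.
by apply/allP => y /mapP[x]; rewrite mem_filter => /andP[Hx _] ->; lia.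
Qed.

Lemma sumn_remove_col_le mu : sumn (remove_col mu) <= sumn mu.
Proof. by elim: mu => //= x s; rewrite /remove_col /=; case: ifP => _ /=; lia. Qed.

Lemma sumn_behead_lt {mu} : is_part mu -> mu != [::] -> sumn (behead mu) < sumn mu.
Proof. by case: mu => //= x s /and3P[_ Hx _]; lia. Qed.

Lemma sumn_remove_col_lt {mu} : is_part mu -> mu != [::] -> sumn (remove_col mu) < sumn mu.
Proof.
case: mu => //= x s /and3P[_ Hx _] _; have := sumn_remove_col_le s.
by rewrite /remove_col /=; case: ifP => _ /=; lia.
Qed.

Lemma sg_fuel_nil f : sg_fuel f [::] = 0.
Proof. by case: f. Qed.

Lemma sg_fuel_enough f g mu : is_part mu -> sumn mu <= f -> sumn mu <= g ->
  sg_fuel f mu = sg_fuel g mu.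
Proof.
elim: f g mu => [|f IH] g [|x s] Hmu Hf Hg; rewrite ?sg_fuel_nil //.
  by move: Hmu Hf => /and3P[_ Hx _] /=; lia.
case: g Hg => [|g] Hg; first by move: Hmu Hg => /and3P[_ Hx _] /=; lia.
have Hne : x :: s != [::] by [].
have Hrow := sumn_behead_lt Hmu Hne; have Hcol := sumn_remove_col_lt Hmu Hne.
rewrite /= -/(pshift (x :: s) 1 0) -/(pshift (x :: s) 0 1) pshift_row // pshift_col.
rewrite (IH g) ?(IH g (remove_col _)) ?is_part_behead ?is_part_remove_col //; lia.
Qed.

Lemma SG_LCTR_rec mu : is_part mu -> mu != [::] ->
  SG_LCTR mu = mex [:: SG_LCTR (behead mu); SG_LCTR (remove_col mu)].
Proof.
case: mu => // x s Hmu Hne.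
have Hrow := sumn_behead_lt Hmu Hne; have Hcol := sumn_remove_col_lt Hmu Hne.
rewrite /SG_LCTR; case Es: (sumn (x :: s)) Hrow => [|m] // Hrow.
rewrite /= -/(pshift (x :: s) 1 0) -/(pshift (x :: s) 0 1) pshift_row // pshift_col.
rewrite (sg_fuel_enough _ m) ?(sg_fuel_enough (sumn (remove_col _)) m) //.
all: first [exact: (is_part_behead Hmu) | exact: (is_part_remove_col Hmu) | lia].
Qed.

(* Rows and columns of the Young diagram, 1-indexed: [part_col mu j] is the
   j-th part of the conjugate partition. *)
Definition part_row (mu : seq nat) (i : nat) : nat := nth 0 mu i.-1.
Definition part_col (mu : seq nat) (j : nat) : nat := count (fun x => j <= x) mu.

Lemma part_row_behead mu i : 0 < i -> part_row (behead mu) i = part_row mu i.+1.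
Proof. by case: i => // i _; rewrite /part_row /= nth_behead. Qed.

Lemma part_col_behead mu j : is_part mu -> 0 < j ->
  part_col (behead mu) j = part_col mu j - 1.
Proof.
case: mu => //= x s /andP[Hs _] Hj; rewrite /part_col /=.
case: (leqP j x) => Hjx /=; first lia.
by rewrite (count_geq_out (sorted_geq_cons Hs)).
Qed.

Lemma part_row_remove_col mu i : is_part mu ->
  part_row (remove_col mu) i = part_row mu i - 1.
Proof.
rewrite /part_row; elim: mu i.-1 => [|x s IH] k Hmu; first by rewrite !nth_nil.
have Hall := sorted_geq_cons (andP Hmu).1.
rewrite /remove_col /=; case: ifP => Hx.
  by case: k => //= k; rewrite (IH _ (is_part_behead Hmu)).
rewrite -/(remove_col s) remove_col_le1; last by apply/allP => y /(allP Hall); lia.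
by rewrite nth_nil; case: k => [|k] /=; [|have := all_leq_nth k Hall]; lia.
Qed.

Lemma part_col_remove_col mu j : 0 < j ->
  part_col (remove_col mu) j = part_col mu j.+1.
Proof.
move=> Hj; rewrite /part_col; elim: mu => //= x s IH.
by rewrite /remove_col /=; case: ifP => Hx /=; rewrite IH; lia.
Qed.

Lemma part_row_antimono {mu} i j : is_part mu -> i <= j ->
  part_row mu j <= part_row mu i.
Proof.
case/andP=> Hs _; rewrite /part_row => Hij.
have Hstep k : nth 0 mu k.+1 <= nth 0 mu k.
  elim: mu k Hs {Hij} => //= x s IH [|k] Hs.
    exact: all_leq_nth (sorted_geq_cons Hs).
  exact: IH (path_sorted Hs).
have Hmono : {homo nth 0 mu : a b / a <= b >-> b <= a}.
  apply: (@homo_leq _ _ (fun a b => b <= a)) => // b a c Hba Hcb.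
  exact: leq_trans Hcb Hba.
apply: Hmono; lia.
Qed.

Lemma part_col_antimono mu i j : i <= j -> part_col mu j <= part_col mu i.
Proof. by move=> Hij; apply: sub_count => y /=; lia. Qed.

Lemma part_conjP mu i j : is_part mu -> 0 < i -> 0 < j ->
  (j <= part_row mu i) = (i <= part_col mu j).
Proof.
elim: mu i => [|x s IH] i Hmu Hi Hj.
  by rewrite /part_row /part_col nth_nil /=; lia.
have Hall := sorted_geq_cons (andP Hmu).1.
rewrite /part_col /=; case: i Hi => [|[|k]] // _.
  rewrite /part_row /=; case: (leqP j x) => Hjx /=; first lia.
  by rewrite (count_geq_out Hall Hjx); lia.
rewrite -[part_row _ _]/(part_row s k.+1) IH ?(is_part_behead Hmu) // /part_col.
case: (leqP j x) => Hjx /=; first lia.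
by rewrite (count_geq_out Hall Hjx); lia.
Qed.

(** * The closed form *)

Definition sg_edge (d x0 x1 y1 y2 : nat) : nat :=
  if (x0 - d) %% 2 == 1 then
    (if d == 1 then 2 else if x0 < x1 then (if d < y1 then 2 else 0)
     else if d < y1 then 1 else if d <= 2 then 2 else if y1 < y2 then 2 else 1)
  else (if d == 1 then 1 else if x0 < x1 then 1 else if d < y1 then 1 else 0).

(* [x_k] stands for the row λ_(d-k) and [y_k] for the column λ'_(d-k), where
   d is the side of the Durfee square; [sg_edge] handles the case where only
   one of λ_d, λ'_d exceeds d. *)
Definition sg_formula (d x2 x1 x0 y2 y1 y0 : nat) : nat :=
  if d == 0 then 0 else
  if d < x0 then (if d < y0 then 0 else sg_edge d x0 x1 y1 y2) else
  if d < y0 then sg_edge d y0 y1 x1 x2 else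
  if d == 1 then 1 else if x0 < x1 then 1 else if y0 < y1 then 1 else 0.

Lemma sg_formula_congr d x2 x1 x0 y2 y1 y0 x2' x1' x0' y2' y1' y0' :
  (2 < d -> x2 = x2') -> (2 < d -> y2 = y2') ->
  (1 < d -> x1 = x1') -> (1 < d -> y1 = y1') -> x0 = x0' -> y0 = y0' ->
  sg_formula d x2 x1 x0 y2 y1 y0 = sg_formula d x2' x1' x0' y2' y1' y0'.
Proof.
case: d => [|[|[|d]]] Hx2 Hy2 Hx1 Hy1 -> -> //; rewrite /sg_formula /sg_edge.
  by rewrite Hx1 ?Hy1.
by rewrite Hx1 ?Hy1 ?Hx2 ?Hy2.
Qed.

(* [r_k], [c_k] play λ_(d-k), λ'_(d-k) and [rp], [cp] play λ_(d+1), λ'_(d+1);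
   the two entries of the mex are the formula at the positions without the
   first row and without the first column, whose Durfee square has side d or
   d - 1. *)
Lemma sg_formula_mex d r3 r2 r1 r0 rp c3 c2 c1 c0 cp :
  0 < d -> rp <= r0 -> r0 <= r1 -> r1 <= r2 -> r2 <= r3 ->
  cp <= c0 -> c0 <= c1 -> c1 <= c2 -> c2 <= c3 ->
  d <= r0 -> rp <= d -> d <= c0 -> cp <= d ->
  (d <= rp) = (d < c0) -> (d <= cp) = (d < r0) ->
  sg_formula d r2 r1 r0 c2 c1 c0 =
  mex [:: if d < c0 then sg_formula d r1 r0 rp (c2 - 1) (c1 - 1) (c0 - 1)
          else sg_formula d.-1 r2 r1 r0 (c3 - 1) (c2 - 1) (c1 - 1);
          if d < r0 then sg_formula d (r2 - 1) (r1 - 1) (r0 - 1) c1 c0 cp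
          else sg_formula d.-1 (r3 - 1) (r2 - 1) (r1 - 1) c2 c1 c0].
Proof.
move=> *; rewrite /sg_formula /sg_edge.
by repeat (case: ifP => ?; try (exfalso; lia)).
Qed.

(** * The Sprague-Grundy value through the Durfee square *)

Definition is_durfee (mu : seq nat) (d : nat) : bool :=
  [&& 0 < d, d <= part_row mu d & part_row mu d.+1 <= d].

Definition sg_durfee (mu : seq nat) (d : nat) : nat :=
  sg_formula d (part_row mu (d - 2)) (part_row mu (d - 1)) (part_row mu d)
    (part_col mu (d - 2)) (part_col mu (d - 1)) (part_col mu d).

Ltac shift_window :=
  try move=> ?; rewrite ?part_row_behead ?part_col_behead ?part_row_remove_col
    ?part_col_remove_col //; try lia;
  first [congr (_ - _) | idtac]; first [congr (part_row _ _) | congr (part_col _ _)]; lia.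

Section DurfeeMoves.

Variables (mu : seq nat) (d : nat).
Hypotheses (Hmu : is_part mu) (Hd : is_durfee mu d).

Lemma SG_behead_durfee :
  (forall e, is_durfee (behead mu) e -> SG_LCTR (behead mu) = sg_durfee (behead mu) e) ->
  SG_LCTR (behead mu) =
  if d < part_col mu d then
    sg_formula d (part_row mu (d - 1)) (part_row mu d) (part_row mu d.+1)
      (part_col mu (d - 2) - 1) (part_col mu (d - 1) - 1) (part_col mu d - 1)
  else sg_formula d.-1 (part_row mu (d - 2)) (part_row mu (d - 1)) (part_row mu d)
      (part_col mu (d - 3) - 1) (part_col mu (d - 2) - 1) (part_col mu (d - 1) - 1).
Proof.
move=> IH; case/and3P: Hd => Hd0 Hd_row Hd_row1.
have Hconj : (d <= part_row mu d.+1) = (d < part_col mu d) by rewrite part_conjP.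
have Hrow2 := part_row_antimono d.+1 d.+2 Hmu (leqnSn _).
case: ifP => Hcol.
  rewrite (IH d); last by rewrite /is_durfee !part_row_behead // Hconj Hcol; lia.
  rewrite /sg_durfee.
  by apply: sg_formula_congr; shift_window.
have [Hd1 | Hd1] := eqVneq d 1.
  suff -> : behead mu = [::] by rewrite Hd1.
  move: Hcol Hmu; rewrite Hd1 /part_col.
  by case: (mu) => // x [|y s] //= Hc /and3P[_ Hx /andP[Hy _]]; move: Hc; rewrite Hx Hy; lia.
rewrite (IH d.-1); last by rewrite /is_durfee !part_row_behead ?prednK //; lia.
rewrite /sg_durfee.
by apply: sg_formula_congr; shift_window.
Qed.

Lemma SG_remove_col_durfee :
  (forall e, is_durfee (remove_col mu) e ->
     SG_LCTR (remove_col mu) = sg_durfee (remove_col mu) e) ->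
  SG_LCTR (remove_col mu) =
  if d < part_row mu d then
    sg_formula d (part_row mu (d - 2) - 1) (part_row mu (d - 1) - 1) (part_row mu d - 1)
      (part_col mu (d - 1)) (part_col mu d) (part_col mu d.+1)
  else sg_formula d.-1 (part_row mu (d - 3) - 1) (part_row mu (d - 2) - 1)
      (part_row mu (d - 1) - 1) (part_col mu (d - 2)) (part_col mu (d - 1)) (part_col mu d).
Proof.
move=> IH; case/and3P: Hd => Hd0 Hd_row Hd_row1.
case: ifP => Hrow.
  rewrite (IH d); last by rewrite /is_durfee !part_row_remove_col //; lia.
  rewrite /sg_durfee.
  by apply: sg_formula_congr; shift_window.
have [Hd1 | Hd1] := eqVneq d 1.
  suff -> : remove_col mu = [::] by rewrite Hd1.
  apply: remove_col_le1; move: Hrow Hd_row Hmu; rewrite Hd1 /part_row.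
  case: (mu) => // x s /= Hx1 Hx2 /andP[/sorted_geq_cons Hs _].
  apply/andP; split; first lia.
  by apply/allP => y /(allP Hs); lia.
have Hrow1 := part_row_antimono d.-1 d Hmu (leq_pred d).
rewrite (IH d.-1); last by rewrite /is_durfee !part_row_remove_col ?prednK //; lia.
rewrite /sg_durfee.
by apply: sg_formula_congr; shift_window.
Qed.

End DurfeeMoves.

Lemma SG_LCTR_durfee mu d : is_part mu -> is_durfee mu d -> SG_LCTR mu = sg_durfee mu d.
Proof.
have [n Hn] := ubnP (sumn mu); elim: n mu d Hn => // n IH mu d Hn Hmu Hd.
have /and3P[Hd0 Hd_row Hd_row1] := Hd.
have Hne : mu != [::] by case: (mu) Hd_row => //; rewrite /part_row nth_nil; lia.
have IHrow e : is_durfee (behead mu) e -> SG_LCTR (behead mu) = sg_durfee (behead mu) e.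
  by apply: IH; [have := sumn_behead_lt Hmu Hne; lia | exact: is_part_behead].
have IHcol e : is_durfee (remove_col mu) e ->
    SG_LCTR (remove_col mu) = sg_durfee (remove_col mu) e.
  by apply: IH; [have := sumn_remove_col_lt Hmu Hne; lia | exact: is_part_remove_col].
rewrite SG_LCTR_rec // (SG_behead_durfee _ _ Hmu Hd IHrow).
rewrite (SG_remove_col_durfee _ _ Hmu Hd IHcol).
have row_mono i j : i <= j -> part_row mu j <= part_row mu i := part_row_antimono i j Hmu.
have col_mono i j : i <= j -> part_col mu j <= part_col mu i := part_col_antimono mu i j.
symmetry; apply: sg_formula_mex => //.
1-4: by apply: row_mono; lia.
1-4: by apply: col_mono; lia.
- by rewrite -part_conjP.
- by have := part_conjP mu d.+1 d.+1 Hmu erefl erefl; case: leqP; lia.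
- by rewrite part_conjP.
- by rewrite -part_conjP.
Qed.

Definition exec (i : instr) (lam : seq nat) (pc : nat) (R : nat -> int) : config :=
  match i with
  | ILen d => Run pc.+1 (upd R d (Posz (size lam)))
  | IRead d s => Run pc.+1 (upd R d (read_entry lam (R s)))
  | IConst d c => Run pc.+1 (upd R d c)
  | IAdd d a b => Run pc.+1 (upd R d (R a + R b)%R)
  | ISub d a b => Run pc.+1 (upd R d (R a - R b)%R)
  | IMul d a b => Run pc.+1 (upd R d (R a * R b)%R)
  | IHalf d a => Run pc.+1 (upd R d (R a %/ 2)%Z)
  | IPar d a => Run pc.+1 (upd R d (R a %% 2)%Z)
  | IMex d a b => Run pc.+1 (upd R d (mexz (R a) (R b)))
  | IJlt a b l => if (R a < R b)%R then Run l R else Run pc.+1 R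
  | IJmp l => Run l R
  | IHalt s => Done (R s)
  end.

Lemma step_Run P lam pc R : pc < size P ->
  step P lam (Run pc R) = exec (nth (IHalt 0) P pc) lam pc R.
Proof. by rewrite /step => ->. Qed.

Definition runs (P : program) (lam : seq nat) (c : config) (k : nat) (c' : config) :=
  iter k (step P lam) c = c' /\
  forall t, t < k -> exists pc R, iter t (step P lam) c = Run pc R.

Definition runs_within (P : program) (lam : seq nat) (c : config) (B : nat) (c' : config) :=
  exists2 k, k <= B & runs P lam c k c'.

Section Runs.

Variables (P : program) (lam : seq nat).

Lemma runs_within_refl c B : runs_within P lam c B c.
Proof. by exists 0 => //; split. Qed.

Lemma runs_within_step pc R B c' :
  runs_within P lam (step P lam (Run pc R)) B c' -> runs_within P lam (Run pc R) B.+1 c'.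
Proof.
case=> k Hk [Hiter Hrun]; exists k.+1 => //; split; first by rewrite iterSr.
case=> [|t] Ht; first by exists pc, R.
by have [pc' [R' E]] := Hrun t Ht; exists pc', R'; rewrite iterSr.
Qed.

Lemma runs_within_trans c B1 c1 B2 c2 :
  runs_within P lam c B1 c1 -> runs_within P lam c1 B2 c2 ->
  runs_within P lam c (B1 + B2) c2.
Proof.
case=> k1 Hk1 [A1 A2] [k2 Hk2 [B1' B2']]; exists (k2 + k1); first lia.
split; first by rewrite iterD A1.
move=> t Ht; case: (ltnP t k1) => Htk; first exact: A2.
have [pc [R E]] := B2' (t - k1) ltac:(lia).
by exists pc, R; rewrite -(subnK Htk) iterD A1.
Qed.

Lemma runs_within_mono c B B' c' :
  B <= B' -> runs_within P lam c B c' -> runs_within P lam c B' c'.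
Proof. by move=> HB [k Hk H]; exists k => //; lia. Qed.

End Runs.

Arguments runs_within_trans {P lam c B1 c1 B2 c2}.
Arguments runs_within_mono {P lam c} B {B' c'}.

Lemma read_entry_in lam i : 0 < i -> i <= size lam ->
  read_entry lam (Posz i) = Posz (part_row lam i).
Proof.
move=> Hi Hir; rewrite /read_entry.
have -> : (1 <= Posz i)%R by rewrite lez_nat.
by rewrite lez_nat Hir /= subzn // subn1.
Qed.

Lemma read_entry_nat lam i : read_entry lam i = Posz (absz (read_entry lam i)).
Proof. by rewrite /read_entry; case: ifP. Qed.

(** * Binary search *)

Definition code_at (P : program) (b : nat) (code : seq instr) :=
  b + size code <= size P /\
  forall i, i < size code -> nth (IHalt 0) P (b + i) = nth (IHalt 0) code i.

Lemma runs_within_code P lam b code i pc R B c' :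
  code_at P b code -> i < size code -> pc = b + i ->
  runs_within P lam (exec (nth (IHalt 0) code i) lam pc R) B c' ->
  runs_within P lam (Run pc R) B.+1 c'.
Proof.
move=> [Hsize Hcode] Hi -> H; apply: runs_within_step.
by rewrite step_Run ?Hcode //; lia.
Qed.

Arguments runs_within_code {P lam b code} i {pc R B c'}.

Ltac exec_code i :=
  apply: (runs_within_code i); [eassumption | by [] | lia | rewrite /=; try rewrite /upd /=].

(* Registers: 0 and 1 hold the constants 0 and 1, [lo, hi] = [reg 2, reg 3]
   is the search interval, and the code looks for the last index i <= hi with
   λ_i >= s * i + j, where s = reg 4 and j = reg 5 (s = 1, j = 0 gives the
   side of the Durfee square, s = 0 gives the column length λ'_j). *)
Definition bsearch_code (b : nat) : seq instr :=
  [:: IJlt 2 3 (b+2); IJmp (b+13); IAdd 6 2 3; IAdd 6 6 1; IHalf 7 6; IRead 8 7;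
      IMul 9 7 4; IAdd 9 9 5; IJlt 8 9 (b+11); IAdd 2 7 0; IJmp b; ISub 3 7 1; IJmp b].

Definition bsearch_pred (lam : seq nat) (s j : int) (i : nat) : bool :=
  ~~ (Posz (part_row lam i) < Posz i * s + j)%R.

Definition bsearch_regs (R : nat -> int) (lo hi : nat) (s j : int) :=
  [/\ R 0 = 0%R, R 1 = 1%R, R 2 = Posz lo, R 3 = Posz hi & R 4 = s /\ R 5 = j].

Definition bsearch_scratch : seq nat := [:: 2; 3; 6; 7; 8; 9].

Lemma bsearch_exit P lam b R lo hi s j :
  code_at P b (bsearch_code b) -> bsearch_regs R lo hi s j -> hi <= lo ->
  runs_within P lam (Run b R) 2 (Run (b + 13) R).
Proof.
move=> Hc [_ _ H2 H3 _] Hle.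
exec_code 0; rewrite H2 H3 ltz_nat ifF; last lia.
exec_code 1; exact: runs_within_refl.
Qed.

Lemma bsearch_halve P lam b R lo hi s j :
  code_at P b (bsearch_code b) -> bsearch_regs R lo hi s j ->
  lo < hi -> hi <= size lam ->
  let mid := (lo + hi).+1 %/ 2 in
  exists2 R', runs_within P lam (Run b R) 10 (Run b R') &
   [/\ if bsearch_pred lam s j mid then bsearch_regs R' mid hi s j
       else bsearch_regs R' lo mid.-1 s j
     & forall x, x \notin bsearch_scratch -> R' x = R x].
Proof.
move=> Hc [H0 H1 H2 H3 [H4 H5]] Hlt Hhi mid.
have Hmid0 : 0 < mid by rewrite /mid; lia.
have Hmid : mid <= size lam by rewrite /mid; lia.
have Emid : ((Posz lo + Posz hi + 1) %/ 2)%Z = Posz mid.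
  by rewrite -[1%R]/(Posz 1) -!PoszD divz_nat addn1.
case Eb: (bsearch_pred lam s j mid); eexists.
- exec_code 0; rewrite H2 H3 ltz_nat Hlt.
  exec_code 2; exec_code 3; exec_code 4; exec_code 5; exec_code 6; exec_code 7; exec_code 8.
  rewrite H1 H2 H3 H4 H5 Emid read_entry_in // ifN; last exact: Eb.
  exec_code 9; exec_code 10; exact: runs_within_refl.
- split; first by split; rewrite //= ?H0 ?addr0.
  by move=> x Hx; repeat (case: ifP => [/eqP E|_]; first by rewrite E in Hx).
- exec_code 0; rewrite H2 H3 ltz_nat Hlt.
  exec_code 2; exec_code 3; exec_code 4; exec_code 5; exec_code 6; exec_code 7; exec_code 8.
  rewrite H1 H2 H3 H4 H5 Emid read_entry_in // ifT; last exact: negbFE Eb.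
  exec_code 11; exec_code 12; exact: runs_within_refl.
- split; first by split; rewrite //= ?H1 -?[1%R]/(Posz 1) ?subzn // subn1.
  by move=> x Hx; repeat (case: ifP => [/eqP E|_]; first by rewrite E in Hx).
Qed.

Arguments bsearch_halve {P lam b R lo hi s j}.

Lemma bsearch_correct P lam b s j e lo hi R :
  code_at P b (bsearch_code b) -> bsearch_regs R lo hi s j ->
  hi - lo < 2 ^ e -> lo <= hi -> hi <= size lam ->
  exists res, exists2 R', runs_within P lam (Run b R) (10 * e + 2) (Run (b + 13) R') &
   [/\ bsearch_regs R' res res s j, lo <= res <= hi,
       res = lo \/ bsearch_pred lam s j res, res = hi \/ ~~ bsearch_pred lam s j res.+1
     & forall x, x \notin bsearch_scratch -> R' x = R x].
Proof.
move=> Hc; elim: e lo hi R => [|e IH] lo hi R HR Hd Hle Hhi.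
  have Ehi : hi = lo by move: Hd; rewrite expn0; lia.
  exists lo; exists R; last by subst hi; split; rewrite ?leqnn; auto.
  apply: (runs_within_mono 2); first lia.
  by apply: bsearch_exit Hc HR _; lia.
have [Ehi | Hlt] := eqVneq hi lo.
  exists lo; exists R; last by subst hi; split; rewrite ?leqnn; auto.
  apply: (runs_within_mono 2); first lia.
  by apply: bsearch_exit Hc HR _; lia.
have {}Hlt : lo < hi by lia.
have [R1 Hrun1 [Hif Hkeep1]] := bsearch_halve Hc HR Hlt Hhi.
set mid := (lo + hi).+1 %/ 2 in Hif.
rewrite expnS in Hd.
case Eb: (bsearch_pred lam s j mid) Hif => HR1.
  have [res [R' Hrun' [HR' Hres Hlo Hhi' Hkeep']]] :=
    IH mid hi R1 HR1 ltac:(rewrite /mid; lia) ltac:(rewrite /mid; lia) Hhi.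
  exists res; exists R'.
    apply: (runs_within_mono (10 + (10 * e + 2))); first lia.
    exact: runs_within_trans Hrun1 Hrun'.
  split => //; first lia.
  - by right; case: Hlo => [->|].
  - by move=> x Hx; rewrite Hkeep' // Hkeep1.
have [res [R' Hrun' [HR' Hres Hlo Hhi' Hkeep']]] :=
  IH lo mid.-1 R1 HR1 ltac:(rewrite /mid; lia) ltac:(rewrite /mid; lia) ltac:(rewrite /mid; lia).
exists res; exists R'.
  apply: (runs_within_mono (10 + (10 * e + 2))); first lia.
  exact: runs_within_trans Hrun1 Hrun'.
split => //; first lia.
- by right; case: Hhi' => [->|]; rewrite ?prednK ?Eb // /mid; lia.
- by move=> x Hx; rewrite Hkeep' // Hkeep1.
Qed.

Arguments bsearch_correct {P lam b s j e lo hi R}.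

Lemma bsearch_pred_durfee lam i : bsearch_pred lam 1 0 i = (i <= part_row lam i).
Proof. by rewrite /bsearch_pred mulr1 addr0 ltz_nat -leqNgt. Qed.

Lemma bsearch_pred_col lam (k i : nat) : bsearch_pred lam 0 (Posz k) i = (k <= part_row lam i).
Proof. by rewrite /bsearch_pred mulr0 add0r ltz_nat -leqNgt. Qed.

Definition bsearch_steps (lam : seq nat) : nat := 10 * (trunc_log 2 (size lam)).+1 + 2.

Section BinarySearchSpecs.

Variables (P : program) (lam : seq nat) (b : nat) (R : nat -> int).
Hypotheses (Hcode : code_at P b (bsearch_code b)) (Hlam : is_part lam).

Lemma bsearch_full_range {s j} : bsearch_regs R 0 (size lam) s j ->
  exists res, exists2 R', runs_within P lam (Run b R) (bsearch_steps lam) (Run (b + 13) R') &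
   [/\ bsearch_regs R' res res s j, res <= size lam,
       res = 0 \/ bsearch_pred lam s j res, res = size lam \/ ~~ bsearch_pred lam s j res.+1
     & forall x, x \notin bsearch_scratch -> R' x = R x].
Proof.
move=> HR; have Hlog : size lam < 2 ^ (trunc_log 2 (size lam)).+1 by apply: trunc_log_ltn.
have [res [R' Hrun [HR' Hres Hlo Hhi Hkeep]]] := bsearch_correct Hcode HR
  (leq_ltn_trans (leq_subr 0 _) Hlog) (leq0n _) (leqnn _).
by exists res; exists R'.
Qed.

Lemma bsearch_durfee : lam != [::] -> bsearch_regs R 0 (size lam) 1 0 ->
  exists d, exists2 R', runs_within P lam (Run b R) (bsearch_steps lam) (Run (b + 13) R') &
   [/\ bsearch_regs R' d d 1 0, is_durfee lam d
     & forall x, x \notin bsearch_scratch -> R' x = R x].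
Proof.
move=> Hne HR; have [d [R' Hrun [HR' Hdr Hlo Hhi Hkeep]]] := bsearch_full_range HR.
exists d; exists R' => //; split => //.
rewrite !bsearch_pred_durfee in Hlo Hhi.
have Hhead : 0 < part_row lam 1 by case: (lam) Hne Hlam => //= x s _ /and3P[].
have Hsize : 0 < size lam by case: (lam) Hne.
have Hd0 : 0 < d by case: (posnP d) Hhi => // ->; case; lia.
apply/and3P; split => //; first by case: Hlo; lia.
case: Hhi => [Er|]; last lia.
by rewrite /part_row /= nth_default // Er.
Qed.

Lemma bsearch_col (j : int) : bsearch_regs R 0 (size lam) 0 j ->
  exists c, exists2 R', runs_within P lam (Run b R) (bsearch_steps lam) (Run (b + 13) R') &
   [/\ bsearch_regs R' c c 0 j, forall k, 0 < k -> j = Posz k -> c = part_col lam k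
     & forall x, x \notin bsearch_scratch -> R' x = R x].
Proof.
move=> HR; have [c [R' Hrun [HR' _ Hlo Hhi Hkeep]]] := bsearch_full_range HR.
exists c; exists R' => //; split => // k Hk Ej; move: Hlo Hhi; rewrite Ej !bsearch_pred_col.
have Hcol : part_col lam k <= size lam by rewrite /part_col count_size.
move=> Hlo Hhi; apply/eqP; rewrite eqn_leq; apply/andP; split.
  case: Hlo => [-> // | Hkc]; case: (posnP c) => [-> // | Hc0].
  by rewrite -part_conjP.
case: Hhi => [->|Hnot] //; rewrite leqNgt; apply: contra Hnot => Hlt.
by rewrite part_conjP.
Qed.

End BinarySearchSpecs.

Arguments bsearch_durfee {P lam b R}.
Arguments bsearch_col {P lam b R} Hcode Hlam {j}.

(** * The program *)

(* A decision tree for [sg_formula] on the registers 10-16 filled by [prog];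
   it is loaded at pc 78 and its jump targets are absolute. *)
Definition eval_code : seq instr :=
  [:: IJlt 10 14 85; IJlt 10 11 92; IJlt 1 10 82; IJmp 118; IJlt 14 15 118;
      IJlt 11 12 118; IJmp 116; IJlt 10 11 116; IAdd 21 14 0; IAdd 22 15 0;
      IAdd 23 16 0; IAdd 24 12 0; IAdd 25 13 0; IJmp 98; IAdd 21 11 0;
      IAdd 22 12 0; IAdd 23 13 0; IAdd 24 15 0; IAdd 25 16 0; IJmp 98;
      ISub 6 21 10; IPar 6 6; IJlt 6 1 111; IJlt 1 10 103; IJmp 120;
      IJlt 21 22 109; IJlt 10 24 118; IConst 18 (Posz 3); IJlt 10 18 120;
      IJlt 24 25 120; IJmp 118; IJlt 10 24 120; IJmp 116; IJlt 1 10 113;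
      IJmp 118; IJlt 21 22 118; IJlt 10 24 118; IJmp 116; IConst 20 (Posz 0);
      IHalt 20; IConst 20 (Posz 1); IHalt 20; IConst 20 (Posz 2); IHalt 20].

(* Binary searches at pc 5, 23, 40 and 58 store d and λ'_d, λ'_(d-1),
   λ'_(d-2) in registers 10-13; then λ_d, λ_(d-1), λ_(d-2) are read into
   registers 14-16. *)
Definition prog : program :=
  [:: IConst 1 (Posz 1); IConst 2 (Posz 0); ILen 3; IConst 4 (Posz 1);
      IConst 5 (Posz 0)] ++ bsearch_code 5 ++
  [:: IAdd 10 2 0; IConst 2 (Posz 0); ILen 3; IConst 4 (Posz 0); IAdd 5 10 0] ++
  bsearch_code 23 ++
  [:: IAdd 11 2 0; IConst 2 (Posz 0); ILen 3; ISub 5 10 1] ++ bsearch_code 40 ++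
  [:: IAdd 12 2 0; IConst 2 (Posz 0); ILen 3; IConst 18 (Posz 2); ISub 5 10 18] ++
  bsearch_code 58 ++
  [:: IAdd 13 2 0; IRead 14 10; ISub 17 10 1; IRead 15 17; IConst 18 (Posz 2);
      ISub 17 10 18; IRead 16 17] ++ eval_code.

Lemma prog_bsearch_code b : b \in [:: 5; 23; 40; 58] -> code_at prog b (bsearch_code b).
Proof.
move=> Hb; split; first by move: Hb; rewrite !inE => /or4P[] /eqP->.
move=> i; rewrite [size _]/= => Hi; move: Hb; rewrite !inE => /or4P[] /eqP->.
all: by do 13 (case: i Hi => [|i] Hi //).
Qed.

Lemma runs_within_prog_step lam pc ins R B c' :
  pc < size prog -> nth (IHalt 0) prog pc = ins ->
  runs_within prog lam (exec ins lam pc R) B c' -> runs_within prog lam (Run pc R) B.+1 c'.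
Proof. by move=> Hpc Hins H; apply: runs_within_step; rewrite step_Run // Hins. Qed.

Ltac exec_prog := match goal with |- runs_within prog _ (Run ?pc _) _ _ =>
  let ins := eval vm_compute in (nth (IHalt 0) prog pc) in
  apply: (@runs_within_prog_step _ pc ins);
  [reflexivity | reflexivity | rewrite /exec /upd /=] end.

Lemma runs_within_done P lam v w B : v = w -> runs_within P lam (Done v) B (Done w).
Proof. by move=> ->; exact: runs_within_refl. Qed.

Definition eval_ready (R : nat -> int) (d x2 x1 x0 y2 y1 y0 : nat) :=
  [/\ R 0 = 0%R, R 1 = 1%R, R 10 = Posz d,
      [/\ R 14 = Posz x0, R 15 = Posz x1 & R 16 = Posz x2]
    & [/\ R 11 = Posz y0, R 12 = Posz y1 & R 13 = Posz y2]].

Lemma eval_code_correct lam {R d x2 x1 x0 y2 y1 y0} :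
  eval_ready R d x2 x1 x0 y2 y1 y0 -> 0 < d -> d <= x0 -> d <= y0 ->
  runs_within prog lam (Run 78 R) 30 (Done (Posz (sg_formula d x2 x1 x0 y2 y1 y0))).
Proof.
move=> [H0 H1 HD [HX0 HX1 HX2] [HY0 HY1 HY2]] Hd Hx Hy.
have Sx : (Posz x0 - Posz d)%R = Posz (x0 - d) by rewrite subzn.
have Sy : (Posz y0 - Posz d)%R = Posz (y0 - d) by rewrite subzn.
repeat (first [ exec_prog; rewrite ?H0 ?H1 ?HD ?HX0 ?HX1 ?HX2 ?HY0 ?HY1 ?HY2 ?Sx ?Sy
                  ?modz_nat ?ltz_nat
              | case: ifP => ? ]).
all: apply: runs_within_done; congr Posz; rewrite /sg_formula /sg_edge.
all: by repeat (case: ifP => ?; try (exfalso; lia)).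
Qed.

Lemma prog_columns {lam d R} : is_part lam -> 0 < d -> bsearch_regs R d d 1 0 ->
  exists y2 y1, exists2 R',
    runs_within prog lam (Run 18 R) (15 + 3 * bsearch_steps lam) (Run 72 R') &
    [/\ R' 0 = 0%R, R' 1 = 1%R, R' 10 = Posz d,
        [/\ R' 11 = Posz (part_col lam d), R' 12 = Posz y1 & R' 13 = Posz y2]
      & (1 < d -> y1 = part_col lam (d - 1)) /\ (2 < d -> y2 = part_col lam (d - 2))].
Proof.
move=> Hlam Hd [R0 R1 R2 _ _].
have [R3 Hrun3 [HR3 R3_10]] :
    exists2 R3, runs_within prog lam (Run 18 R) 5 (Run 23 R3) &
    bsearch_regs R3 0 (size lam) 0 (Posz d) /\ R3 10 = Posz d.
  eexists; first by do 5 exec_prog; exact: runs_within_refl.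
  by rewrite /bsearch_regs /upd /= R0 R1 R2 !addr0.
have [y0 [R4 Hrun4 [[R4_0 R4_1 R4_2 _ [R4_4 _]] Hy0 Hkeep4]]] :=
  bsearch_col (prog_bsearch_code 23 erefl) Hlam HR3.
have [R5 Hrun5 [HR5 R5_10 R5_11]] :
    exists2 R5, runs_within prog lam (Run 36 R4) 4 (Run 40 R5) &
    [/\ bsearch_regs R5 0 (size lam) 0 (Posz d - 1), R5 10 = Posz d & R5 11 = Posz y0].
  eexists; first by do 4 exec_prog; exact: runs_within_refl.
  by rewrite /bsearch_regs /upd /= R4_0 R4_1 R4_2 R4_4 !Hkeep4 // R3_10 !addr0.
have [y1 [R6 Hrun6 [[R6_0 R6_1 R6_2 _ [R6_4 _]] Hy1 Hkeep6]]] :=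
  bsearch_col (prog_bsearch_code 40 erefl) Hlam HR5.
have [R7 Hrun7 [HR7 R7_10 R7_11 R7_12]] :
    exists2 R7, runs_within prog lam (Run 53 R6) 5 (Run 58 R7) &
    [/\ bsearch_regs R7 0 (size lam) 0 (Posz d - Posz 2), R7 10 = Posz d, R7 11 = Posz y0
      & R7 12 = Posz y1].
  eexists; first by do 5 exec_prog; exact: runs_within_refl.
  by rewrite /bsearch_regs /upd /= R6_0 R6_1 R6_2 R6_4 !Hkeep6 // R5_10 R5_11 !addr0.
have [y2 [R8 Hrun8 [[R8_0 R8_1 R8_2 _ _] Hy2 Hkeep8]]] :=
  bsearch_col (prog_bsearch_code 58 erefl) Hlam HR7.
exists y2, y1; exists (upd R8 13 (Posz y2)).
  set B := bsearch_steps lam.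
  apply: (runs_within_mono (5 + (B + (4 + (B + (5 + (B + 1))))))); first lia.
  apply: (runs_within_trans Hrun3); apply: (runs_within_trans Hrun4).
  apply: (runs_within_trans Hrun5); apply: (runs_within_trans Hrun6).
  apply: (runs_within_trans Hrun7); apply: (runs_within_trans Hrun8).
  by exec_prog; rewrite R8_2 R8_0 addr0; exact: runs_within_refl.
rewrite /upd /= R8_0 R8_1 !Hkeep8 // R7_10 R7_11 R7_12 (Hy0 d) //; split => //.
split=> Hd'; [apply: Hy1 | apply: Hy2]; rewrite ?subzn //; lia.
Qed.

Lemma durfee_le_size {lam d} : is_durfee lam d -> d <= size lam.
Proof.
case/and3P=> Hd0 Hdr _; rewrite leqNgt; apply/negP => Hsize.
by move: Hdr; rewrite /part_row nth_default; lia.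
Qed.

Lemma prog_reaches_eval lam : is_part lam -> lam != [::] ->
  exists d x2 x1 y2 y1, exists2 R,
    runs_within prog lam init (26 + 4 * bsearch_steps lam) (Run 78 R) &
    [/\ eval_ready R d x2 x1 (part_row lam d) y2 y1 (part_col lam d), is_durfee lam d
      & [/\ 2 < d -> x2 = part_row lam (d - 2), 2 < d -> y2 = part_col lam (d - 2),
             1 < d -> x1 = part_row lam (d - 1) & 1 < d -> y1 = part_col lam (d - 1)]].
Proof.
move=> Hlam Hne.
have [R1 Hrun1 HR1] : exists2 R1, runs_within prog lam init 5 (Run 5 R1) &
    bsearch_regs R1 0 (size lam) 1 0.
  by eexists; first by rewrite /init; do 5 exec_prog; exact: runs_within_refl.
have [d [R2 Hrun2 [HR2 Hd _]]] := bsearch_durfee (prog_bsearch_code 5 erefl) Hlam Hne HR1.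
have Hd0 : 0 < d by case/and3P: Hd.
have Hdr := durfee_le_size Hd.
have [y2 [y1 [R3 Hrun3 [R3_0 R3_1 R3_10 [R3_11 R3_12 R3_13] [Hy1 Hy2]]]]] :=
  prog_columns Hlam Hd0 HR2.
have row_at i : i < d -> read_entry lam (Posz d - Posz i) = Posz (part_row lam (d - i)).
  by move=> Hid; rewrite subzn ?read_entry_in; lia.
set x1 := absz (read_entry lam (Posz d - 1)).
set x2 := absz (read_entry lam (Posz d - Posz 2)).
exists d, x2, x1, y2, y1; eexists.
  apply: (runs_within_mono (5 + (bsearch_steps lam + (15 + 3 * bsearch_steps lam + 6)))); first lia.
  apply: (runs_within_trans Hrun1); apply: (runs_within_trans Hrun2).
  apply: (runs_within_trans Hrun3).
  by do 6 exec_prog; exact: runs_within_refl.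
rewrite /eval_ready /= R3_0 R3_1 R3_10 R3_11 R3_12 R3_13 read_entry_in //.
split => //; first by split; rewrite //= -!read_entry_nat.
split=> [Hd2 | // | Hd1 | //]; first by rewrite /x2 row_at.
by rewrite /x1 -[1%R]/(Posz 1) row_at.
Qed.

Lemma prog_computes_SG lam : is_part lam -> lam != [::] ->
  runs_within prog lam init (64 + 40 * (trunc_log 2 (size lam)).+1)
    (Done (Posz (SG_LCTR lam))).
Proof.
move=> Hlam Hne.
have [d [x2 [x1 [y2 [y1 [R Hrun [Hready Hd [Hx2 Hy2 Hx1 Hy1]]]]]]]] :=
  prog_reaches_eval lam Hlam Hne.
have /and3P[Hd0 Hdr _] := Hd.
have Hdc : d <= part_col lam d by rewrite -part_conjP.
have Heval := eval_code_correct lam Hready Hd0 Hdr Hdc.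
rewrite (SG_LCTR_durfee _ _ Hlam Hd).
apply: (runs_within_mono (26 + 4 * bsearch_steps lam + 30)); first by rewrite /bsearch_steps; lia.
have <- : sg_formula d x2 x1 (part_row lam d) y2 y1 (part_col lam d) = sg_durfee lam d.
  exact: sg_formula_congr.
exact: runs_within_trans Hrun Heval.
Qed.

Lemma size_le_sumn lam : all (fun x => 0 < x) lam -> size lam <= sumn lam.
Proof. by elim: lam => //= x s IH /andP[Hx /IH]; lia. Qed.

Theorem mainTheorem15 :
  exists (P : program) (C : nat),
    forall (n : nat) (lam : seq nat),
      (1 <= n)%N -> is_partition n lam ->
      exists t : nat,
        [/\ halts_in P lam t (Posz (SG_LCTR lam)),
            (t <= C * (trunc_log 2 (size lam)).+1)%N
          & (t <= C * (trunc_log 2 n).+1)%N].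
Proof.
exists prog, 104 => n lam Hn /and3P[Hsorted Hpos /eqP Hsum].
have Hlam : is_part lam by apply/andP.
have Hne : lam != [::] by case: (lam) Hsum => //= Hn0; lia.
have [t Ht Hhalts] := prog_computes_SG lam Hlam Hne.
have Hlog : trunc_log 2 (size lam) <= trunc_log 2 n.
  by apply: leq_trunc_log; rewrite -Hsum size_le_sumn.
by exists t; split => //; lia.
Qed.
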